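(* Consider the simplified model in the context (common Rician factor $\kappa$, intercell factor $\alpha$, orthogonal LoS components with $\frac1N\bar{\mathbf H}_{jj}^H\bar{\mathbf H}_{jj}=\frac{\kappa}{1+\kappa}\mathbf I_K$ for all $j$) under the asymptotic regime of the context. Then the deterministic approximations $\bar\gamma^{\rm MRC}_{jk}$ and $\bar\gamma^{\rm MRT}_{jk}$ both reduce to $$\frac{1}{\frac{1}{\nu N\rho}\frac{1+\kappa}{\tau}+\frac{K}{N\nu}\Big(\bar L\frac{1+\kappa}{\tau}+\frac1{\tau^2}\frac{\kappa}{1+\kappa}\Big)+\frac{\alpha}{\tau^2}\Big(\bar L-\frac1{1+\kappa}\Big)}=\frac{1}{\frac{\bar L}{N\rho}\frac{1+\kappa}{\tau}+\frac1{\rho^{\rm tr}}A+\frac KN\bar LB+\frac{\alpha}{\tau^2}\Big(\bar L-\frac1{1+\kappa}\Big)},$$ where $\rho=\rho^{\rm dl}$ for MRT and $\rho=\rho^{\rm ul}$ for MRC, $\nu=\frac{\rho^{\rm tr}}{1+\rho^{\rm tr}\bar L}$, $\bar L=\alpha(L-1)+\frac1{1+\kappa}$, $\tau=\frac1{1+\kappa}+\frac{\kappa}{\nu}$, $A=\big(\frac KN\bar L+\frac1{N\rho}\big)\frac{1+\kappa}{\tau}+\frac KN\frac1{\tau^2}\frac{\kappa}{1+\kappa}$ and $B=\bar L\frac{1+\kappa}{\tau}+\frac1{\tau^2}\frac{\kappa}{1+\kappa}$.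
   Context: Simplified model: $L$ cells, each BS with $N$ antennas and $K$ single-antenna UEs; channel from UE $k$ in cell $l$ to BS $j$: $\mathbf h_{jjk}=\sqrt{\frac1{1+\kappa}}\mathbf z_{jjk}+\sqrt{\frac{\kappa}{1+\kappa}}\mathbf a_{jjk}$, $\mathbf h_{jlk}=\sqrt\alpha\,\mathbf z_{jlk}$ ($l\ne j$), with independent $\mathbf z_{jlk}\sim\mathcal{CN}(\mathbf 0,\mathbf I_N)$, intercell factor $\alpha\in(0,1]$, Rician factor $\kappa\ge0$, deterministic $\mathbf a_{jjk}\in\mathbb C^N$. Thus $d_{jjk}=\frac1{1+\kappa}$, $d_{jlk}=\alpha$ ($l\ne j$), LoS vectors $\bar{\mathbf h}_{jjk}=\sqrt{\frac{\kappa}{1+\kappa}}\mathbf a_{jjk}$, $\bar{\mathbf H}_{jj}=[\bar{\mathbf h}_{jj1},\dots,\bar{\mathbf h}_{jjK}]$. With training SNR $\rho^{\rm tr}>0$, $\phi_{jlk}=\frac{d_{jjk}d_{jlk}}{1/\rho^{\rm tr}+\sum_nd_{jnk}}$ (so $\phi_{jjk}=\frac{\nu}{(1+\kappa)^2}$, $\phi_{jlk}=\frac{\alpha\nu}{1+\kappa}$ for $l\ne j$). Let $\bar\theta_l=(\frac1K\sum_k(\phi_{llk}+\frac1N\bar{\mathbf h}_{llk}^H\bar{\mathbf h}_{llk}))^{-1}$. Deterministic approximations: $\bar\gamma^{\rm MRT}_{jk}=\frac{\bar\theta_j(\phi_{jjk}+\frac1N\bar{\mathbf h}_{jjk}^H\bar{\mathbf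 h}_{jjk})^2}{\frac1{N\rho^{\rm dl}}+s^{\rm MRT}_{jk}+\bar\theta_j\sum_{i\ne k}|\frac1N\bar{\mathbf h}_{jji}^H\bar{\mathbf h}_{jjk}|^2+\sum_{l\ne j}\bar\theta_l\phi_{ljk}^2}$, $s^{\rm MRT}_{jk}=\frac1N\sum_l\sum_i\bar\theta_ld_{ljk}(\phi_{lli}+\frac1N\bar{\mathbf h}_{lli}^H\bar{\mathbf h}_{lli})+\frac1N\sum_{i\ne k}\bar\theta_j\phi_{jji}\frac1N\bar{\mathbf h}_{jjk}^H\bar{\mathbf h}_{jjk}$; $\bar\gamma^{\rm MRC}_{jk}=\frac{(\phi_{jjk}+\frac1N\bar{\mathbf h}_{jjk}^H\bar{\mathbf h}_{jjk})^2}{\frac1{N\rho^{\rm ul}\bar\theta_j}+s^{\rm MRC}_{jk}+\sum_{i\ne k}|\frac1N\bar{\mathbf h}_{jjk}^H\bar{\mathbf h}_{jji}|^2+\sum_{l\ne j}\phi_{jlk}^2}$, $s^{\rm MRC}_{jk}=\frac1N\sum_l\sum_id_{jli}(\phi_{jjk}+\frac1N\bar{\mathbf h}_{jjk}^H\bar{\mathbf h}_{jjk})+\frac1N\sum_{i\ne k}\phi_{jjk}\frac1N\bar{\mathbf h}_{jji}^H\bar{\mathbf h}_{jji}$. Asymptotic regime: $N,K\to\infty$ with $1\le\liminf N/K\le\limsup N/K<\infty$; large-scale coefficients bounded away from $0$ and $\infty$; $\limsup_N\|\bar{\mathbf H}_{jj}\|<\infty$ (spectral norm). *)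

From HB Require Import structures.
From mathcomp Require Import all_boot all_order all_algebra.
From mathcomp Require Import complex.
From mathcomp Require Import all_classical all_reals all_analysis.
Set Implicit Arguments. Unset Strict Implicit. Unset Printing Implicit Defensive.
Import Order.TTheory GRing.Theory Num.Theory.
Local Open Scope ring_scope.
Local Open Scope complex_scope.

Section Model.
Variable R : realType.

Definition sqmod (z : R[i]) : R := complex.Re z ^+ 2 + complex.Im z ^+ 2.

Definition ninner (N : nat) (u v : 'cV[R[i]]_N) : R[i] :=
  (\sum_(n < N) (conjc (u n 0)) * v n 0) / (N%:R)%:C.

Definition nnorm2 (N : nat) (u : 'cV[R[i]]_N) : R := complex.Re (ninner u u).

(* Simplified model with L cells (indices 'I_L), K UEs per cell, N antennas.
   a j k = a_{jjk} is the deterministic LoS vector of UE k of cell j at BS j. *)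
Variables (L N K : nat) (alpha kappa rho_tr : R).
Variable a : 'I_L -> 'I_K -> 'cV[R[i]]_N.

Definition hbar (j : 'I_L) (k : 'I_K) : 'cV[R[i]]_N :=
  (Num.sqrt (kappa / (1 + kappa)))%:C *: a j k.

(* large-scale coefficients d_{jlk} (channel from UE k in cell l to BS j) *)
Definition dcoef (j l : 'I_L) (k : 'I_K) : R :=
  if j == l then 1 / (1 + kappa) else alpha.

Definition phi (j l : 'I_L) (k : 'I_K) : R :=
  dcoef j j k * dcoef j l k / (1 / rho_tr + \sum_(n < L) dcoef j n k).

Definition thetabar (l : 'I_L) : R :=
  ((\sum_(k < K) (phi l l k + nnorm2 (hbar l k))) / K%:R)^-1.

Definition s_MRT (j : 'I_L) (k : 'I_K) : R :=
  (\sum_(l < L) \sum_(i < K)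
      thetabar l * dcoef l j k * (phi l l i + nnorm2 (hbar l i))) / N%:R
  + (\sum_(i < K | i != k) thetabar j * phi j j i * nnorm2 (hbar j k)) / N%:R.

Definition gamma_MRT (rho_dl : R) (j : 'I_L) (k : 'I_K) : R :=
  thetabar j * (phi j j k + nnorm2 (hbar j k)) ^+ 2 /
  (1 / (N%:R * rho_dl) + s_MRT j k
   + thetabar j * (\sum_(i < K | i != k) sqmod (ninner (hbar j i) (hbar j k)))
   + \sum_(l < L | l != j) thetabar l * phi l j k ^+ 2).

Definition s_MRC (j : 'I_L) (k : 'I_K) : R :=
  (\sum_(l < L) \sum_(i < K)
      dcoef j l i * (phi j j k + nnorm2 (hbar j k))) / N%:R
  + (\sum_(i < K | i != k) phi j j k * nnorm2 (hbar j i)) / N%:R.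

Definition gamma_MRC (rho_ul : R) (j : 'I_L) (k : 'I_K) : R :=
  (phi j j k + nnorm2 (hbar j k)) ^+ 2 /
  (1 / (N%:R * rho_ul * thetabar j) + s_MRC j k
   + (\sum_(i < K | i != k) sqmod (ninner (hbar j k) (hbar j i)))
   + \sum_(l < L | l != j) phi j l k ^+ 2).

End Model.

Section Closed.
Variable R : realType.
Variables (L N K : nat) (alpha kappa rho_tr rho : R).

Definition Lbar : R := alpha * (L%:R - 1) + 1 / (1 + kappa).
Definition nu : R := rho_tr / (1 + rho_tr * Lbar).
Definition tau : R := 1 / (1 + kappa) + kappa / nu.
Definition Bc : R := Lbar * ((1 + kappa) / tau) + 1 / tau ^+ 2 * (kappa / (1 + kappa)).
Definition Ac : R :=
  (K%:R / N%:R * Lbar + 1 / (N%:R * rho)) * ((1 + kappa) / tau)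
  + K%:R / N%:R * (1 / tau ^+ 2) * (kappa / (1 + kappa)).

Definition closed1 : R :=
  1 / (1 / (nu * N%:R * rho) * ((1 + kappa) / tau)
       + K%:R / (N%:R * nu) * (Lbar * ((1 + kappa) / tau)
                               + 1 / tau ^+ 2 * (kappa / (1 + kappa)))
       + alpha / tau ^+ 2 * (Lbar - 1 / (1 + kappa))).

Definition closed2 : R :=
  1 / (Lbar / (N%:R * rho) * ((1 + kappa) / tau)
       + 1 / rho_tr * Ac
       + K%:R / N%:R * Lbar * Bc
       + alpha / tau ^+ 2 * (Lbar - 1 / (1 + kappa))).

End Closed.

From Pilot Require Import Defs.
From HB Require Import structures.
From mathcomp Require Import all_boot all_order all_algebra.
From mathcomp Require Import complex.
From mathcomp Require Import all_classical all_reals all_analysis.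
From mathcomp Require Import ring.
Import Order.TTheory GRing.Theory Num.Theory.
Import numFieldNormedType.Exports.
Local Open Scope ring_scope.
Local Open Scope complex_scope.
Local Open Scope classical_set_scope.

Set Implicit Arguments.
Unset Strict Implicit.

(* With orthogonal LoS vectors every ingredient of the two deterministic
   equivalents is independent of the cell and the user: phi_jjk = nu/(1+kappa)^2,
   phi_jlk = alpha nu/(1+kappa), (1/N)|hbar_jjk|^2 = kappa/(1+kappa), the LoS
   cross terms vanish and thetabar_l = (1+kappa)/(nu tau).  Substituting, both
   gamma_MRC and gamma_MRT equal exactly 1/E, where E is the denominator of the
   closed form with K - 1 instead of K in the LoS interference term; so the
   closed form is 1/(E + c/N) for a constant c.  Since E >= (K/N) m with m > 0
   and N/K is bounded, 1/E stays bounded and 1/E - 1/(E + c/N) <= (c/N)/E^2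
   tends to 0. *)

Lemma sumr_ord_neq_const (R : pzRingType) (n : nat) (i0 : 'I_n) (c : R) :
  \sum_(i < n | i != i0) c = (n%:R - 1) * c.
Proof.
have : \sum_(i < n) c = c + \sum_(i < n | i != i0) c by rewrite (bigD1 i0).
rewrite sumr_const card_ord.
by move=> /(canLR (addKr c)) <-; rewrite mulrBl mul1r mulr_natl addrC.
Qed.

Lemma sqr_div_sqr_mul (F : fieldType) (P D E : F) :
  P != 0 -> D = P ^+ 2 * E -> P ^+ 2 / D = E^-1.
Proof. by move=> P0 ->; rewrite invfM mulrA divff ?mul1r ?expf_neq0. Qed.

Lemma invf_mul_sqr_div_mul (F : fieldType) (P D E : F) :
  P != 0 -> D = P * E -> P^-1 * P ^+ 2 / D = E^-1.
Proof. by move=> P0 ->; rewrite expr2 mulKf // invfM mulrA divff ?mul1r. Qed.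

Lemma invr_sub_invrD_bound (R : realFieldType) (E d : R) :
  0 < E -> 0 <= d -> 0 <= E^-1 - (E + d)^-1 <= d * E^-1 ^+ 2.
Proof.
move=> E_gt0 d_ge0; have Ed_gt0 : 0 < E + d by rewrite ltr_wpDr.
have -> : E^-1 - (E + d)^-1 = d * E^-1 * (E + d)^-1.
  by field; rewrite !gt_eqF.
rewrite !mulr_ge0 ?invr_ge0 ?(ltW E_gt0) ?(ltW Ed_gt0) //=.
rewrite expr2 mulrA ler_wpM2l ?mulr_ge0 ?invr_ge0 ?(ltW E_gt0) //.
by rewrite lef_pV2 ?posrE ?lerDl.
Qed.

Lemma cvg_invr_sub_invrD (R : realType) (E d : nat -> R) (u : R) :
  (\forall n \near \oo, 0 < E n /\ (E n)^-1 <= u) ->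
  (\forall n \near \oo, 0 <= d n) -> d @ \oo --> 0 ->
  (fun n => (E n)^-1 - (E n + d n)^-1) @ \oo --> 0.
Proof.
move=> E_bnd d_ge0 d_cvg.
apply: (squeeze_cvgr (f := fun=> 0) (h := fun n => d n * u ^+ 2)).
- near=> n; have [E_gt0 Eu] : 0 < E n /\ (E n)^-1 <= u by near: n.
  have dn_ge0 : 0 <= d n by near: n.
  have /andP[-> le_du] := invr_sub_invrD_bound E_gt0 dn_ge0.
  apply: (le_trans le_du); rewrite ler_wpM2l // lerXn2r ?nnegrE //.
  + by rewrite invr_ge0 ltW.
  + by rewrite (le_trans _ Eu) // invr_ge0 ltW.
- exact: cvg_cst.
- by rewrite -(mul0r (u ^+ 2)); apply: cvgM d_cvg (cvg_cst _).
Unshelve. all: end_near.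
Qed.

Section Channel.
Variable R : realType.
Variables (L : nat) (alpha kappa rho_tr : R).
Hypotheses (L_gt0 : (0 < L)%N) (alpha_gt0 : 0 < alpha) (kappa_ge0 : 0 <= kappa)
  (rho_tr_gt0 : 0 < rho_tr).

Local Notation Lbar := (Lbar L alpha kappa).
Local Notation nu := (nu L alpha kappa rho_tr).
Local Notation tau := (tau L alpha kappa rho_tr).

Lemma kappaD1_gt0 : 0 < 1 + kappa.
Proof. by rewrite ltr_pwDl. Qed.

Lemma Lbar_subr_ge0 : 0 <= Lbar - 1 / (1 + kappa).
Proof. by rewrite /Defs.Lbar addrK mulr_ge0 ?(ltW alpha_gt0) // subr_ge0 ler1n. Qed.

Lemma Lbar_gt0 : 0 < Lbar.
Proof.
rewrite -(subrK (1 / (1 + kappa)) Lbar) ltr_wpDl ?Lbar_subr_ge0 //.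
exact: divr_gt0 ltr01 kappaD1_gt0.
Qed.

Lemma nu_den_gt0 : 0 < 1 + rho_tr * Lbar.
Proof. by rewrite addr_gt0 // mulr_gt0 // Lbar_gt0. Qed.

Lemma nu_gt0 : 0 < nu.
Proof. by rewrite /Defs.nu divr_gt0 // nu_den_gt0. Qed.

Lemma tau_gt0 : 0 < tau.
Proof.
apply: ltr_wpDr; first exact: divr_ge0 kappa_ge0 (ltW nu_gt0).
exact: divr_gt0 ltr01 kappaD1_gt0.
Qed.

Lemma sum_dcoef (j : 'I_L) (K : nat) (k : 'I_K) :
  \sum_(n < L) dcoef alpha kappa j n k = Lbar.
Proof.
rewrite (bigD1 j) //= /dcoef eqxx.
under eq_bigr => n nj do rewrite eq_sym (negbTE nj).
by rewrite sumr_ord_neq_const addrC mulrC.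
Qed.

Lemma dcoefC (j l : 'I_L) (K : nat) (k : 'I_K) :
  dcoef alpha kappa l j k = dcoef alpha kappa j l k.
Proof. by rewrite /dcoef eq_sym. Qed.

Local Ltac nonzero := rewrite ?gt_eqF ?kappaD1_gt0 ?nu_den_gt0 ?nu_gt0 ?tau_gt0.

Lemma phi_diag (j : 'I_L) (K : nat) (k : 'I_K) :
  phi alpha kappa rho_tr j j k = nu / (1 + kappa) ^+ 2.
Proof.
rewrite /phi sum_dcoef /dcoef eqxx /Defs.nu.
by field; nonzero.
Qed.

Lemma phi_neq (j l : 'I_L) (K : nat) (k : 'I_K) :
  j != l -> phi alpha kappa rho_tr j l k = alpha * nu / (1 + kappa).
Proof.
move=> jl; rewrite /phi sum_dcoef /dcoef eqxx (negbTE jl) /Defs.nu.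
by field; nonzero.
Qed.

Lemma phi_diag_add_los :
  nu / (1 + kappa) ^+ 2 + kappa / (1 + kappa) = nu * tau / (1 + kappa).
Proof. by rewrite /Defs.tau; field; nonzero. Qed.

Lemma signal_gain_gt0 : 0 < nu * tau / (1 + kappa).
Proof. exact: divr_gt0 (mulr_gt0 nu_gt0 tau_gt0) kappaD1_gt0. Qed.

Section Orthogonal.
Variables (N K : nat) (rho : R) (a : 'I_L -> 'I_K -> 'cV[R[i]]_N).
Hypotheses (N_gt0 : (0 < N)%N) (K_gt0 : (0 < K)%N) (rho_gt0 : 0 < rho).
Hypothesis los_orth : forall j i k, ninner (hbar kappa a j i) (hbar kappa a j k)
  = (if i == k then kappa / (1 + kappa) else 0)%:C.

(* The common denominator of gamma_MRC and gamma_MRT: that of closed1 with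
   K - 1 in place of K in the LoS interference term. *)
Definition orth_den : R :=
  1 / (nu * N%:R * rho) * ((1 + kappa) / tau)
  + K%:R / (N%:R * nu) * (Lbar * ((1 + kappa) / tau))
  + (K%:R - 1) / (N%:R * nu) * (1 / tau ^+ 2 * (kappa / (1 + kappa)))
  + alpha / tau ^+ 2 * (Lbar - 1 / (1 + kappa)).

Local Ltac nonzero_orth := nonzero; rewrite ?rho_gt0 ?ltr0n ?N_gt0 ?K_gt0.

Lemma nnorm2_hbar j k : nnorm2 (hbar kappa a j k) = kappa / (1 + kappa).
Proof. by rewrite /nnorm2 los_orth eqxx. Qed.

Lemma sqmod_ninner_hbar j i k :
  i != k -> sqmod (ninner (hbar kappa a j i) (hbar kappa a j k)) = 0.
Proof. by move=> ik; rewrite /sqmod los_orth (negbTE ik) /= expr0n /= addr0. Qed.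

Lemma thetabar_orth l :
  thetabar alpha kappa rho_tr a l = (nu * tau / (1 + kappa))^-1.
Proof.
rewrite /thetabar.
under eq_bigr => i _ do rewrite phi_diag nnorm2_hbar phi_diag_add_los.
by rewrite sumr_const card_ord; field; nonzero_orth.
Qed.

Lemma gamma_MRC_orth j k : gamma_MRC alpha kappa rho_tr a rho j k = orth_den^-1.
Proof.
have pilot_sum : \sum_(l < L | l != j) phi alpha kappa rho_tr j l k ^+ 2
    = (L%:R - 1) * (alpha * nu / (1 + kappa)) ^+ 2.
  under eq_bigr => l lj do rewrite phi_neq 1?eq_sym //.
  by rewrite sumr_ord_neq_const.
have los_sum : \sum_(i < K | i != k) nu / (1 + kappa) ^+ 2 * nnorm2 (hbar kappa a j i)
    = (K%:R - 1) * (nu / (1 + kappa) ^+ 2 * (kappa / (1 + kappa))).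
  by under eq_bigr => i _ do rewrite nnorm2_hbar; rewrite sumr_ord_neq_const.
have cross_sum :
    \sum_(i < K | i != k) sqmod (ninner (hbar kappa a j k) (hbar kappa a j i)) = 0.
  by apply: big1 => i ik; rewrite sqmod_ninner_hbar // eq_sym.
rewrite /gamma_MRC /s_MRC thetabar_orth phi_diag nnorm2_hbar phi_diag_add_los.
rewrite pilot_sum los_sum cross_sum exchange_big /=.
under eq_bigr => i _ do rewrite -mulr_suml sum_dcoef.
rewrite sumr_const card_ord.
apply: sqr_div_sqr_mul; first by rewrite gt_eqF ?signal_gain_gt0.
by rewrite /orth_den /Defs.Lbar; field; nonzero_orth.
Qed.

Lemma gamma_MRT_orth j k : gamma_MRT alpha kappa rho_tr a rho j k = orth_den^-1.
Proof.
have gain_neq0 : nu * tau / (1 + kappa) != 0 by rewrite gt_eqF ?signal_gain_gt0.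
have pilot_sum : \sum_(l < L | l != j)
      thetabar alpha kappa rho_tr a l * phi alpha kappa rho_tr l j k ^+ 2
    = (L%:R - 1) * ((nu * tau / (1 + kappa))^-1 * (alpha * nu / (1 + kappa)) ^+ 2).
  under eq_bigr => l lj do rewrite thetabar_orth phi_neq //.
  by rewrite sumr_ord_neq_const.
have los_sum : \sum_(i < K | i != k)
      thetabar alpha kappa rho_tr a j * phi alpha kappa rho_tr j j i * nnorm2 (hbar kappa a j k)
    = (K%:R - 1) * ((nu * tau / (1 + kappa))^-1 * (nu / (1 + kappa) ^+ 2)
                    * (kappa / (1 + kappa))).
  under eq_bigr => i _ do rewrite thetabar_orth phi_diag nnorm2_hbar.
  by rewrite sumr_ord_neq_const.
have cross_sum :
    \sum_(i < K | i != k) sqmod (ninner (hbar kappa a j i) (hbar kappa a j k)) = 0.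
  by apply: big1 => i ik; rewrite sqmod_ninner_hbar.
have interference_sum : \sum_(l < L) \sum_(i < K) thetabar alpha kappa rho_tr a l
      * dcoef alpha kappa l j k * (phi alpha kappa rho_tr l l i + nnorm2 (hbar kappa a l i))
    = K%:R * Lbar.
  under eq_bigr => l _ do under eq_bigr => i _ do
    rewrite thetabar_orth phi_diag nnorm2_hbar phi_diag_add_los mulrAC mulVf // mul1r dcoefC.
  rewrite exchange_big /=; under eq_bigr => i _ do rewrite sum_dcoef.
  by rewrite sumr_const card_ord mulr_natl.
rewrite /gamma_MRT /s_MRT pilot_sum los_sum cross_sum interference_sum.
rewrite thetabar_orth phi_diag nnorm2_hbar phi_diag_add_los.
apply: invf_mul_sqr_div_mul => //.
by rewrite /orth_den /Defs.Lbar; field; nonzero_orth.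
Qed.

Lemma closed1_orth_den :
  closed1 L N K alpha kappa rho_tr rho
  = (orth_den + kappa / ((1 + kappa) * nu * tau ^+ 2 * N%:R))^-1.
Proof. by rewrite /closed1 /orth_den div1r; congr (_^-1); field; nonzero_orth. Qed.

Lemma orth_den_ge : K%:R / N%:R * (Lbar * (1 + kappa) / (tau * nu)) <= orth_den.
Proof.
have -> : K%:R / N%:R * (Lbar * (1 + kappa) / (tau * nu))
    = K%:R / (N%:R * nu) * (Lbar * ((1 + kappa) / tau)) by field; nonzero_orth.
have N_ge0 : 0 <= N%:R :> R by rewrite ler0n.
have K1_ge0 : 0 <= K%:R - 1 :> R by rewrite subr_ge0 ler1n.
have tau2_ge0 : 0 <= tau ^+ 2 by rewrite exprn_ge0 ?(ltW tau_gt0).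
have kappa_frac_ge0 : 0 <= kappa / (1 + kappa) by rewrite divr_ge0 ?(ltW kappaD1_gt0).
rewrite /orth_den; apply: ler_wpDr; last apply: ler_wpDr; last apply: ler_wpDl => //.
- exact: mulr_ge0 (divr_ge0 (ltW alpha_gt0) tau2_ge0) Lbar_subr_ge0.
- exact: mulr_ge0 (divr_ge0 K1_ge0 (mulr_ge0 N_ge0 (ltW nu_gt0)))
    (mulr_ge0 (divr_ge0 ler01 tau2_ge0) kappa_frac_ge0).
- exact: mulr_ge0 (divr_ge0 ler01 (mulr_ge0 (mulr_ge0 (ltW nu_gt0) N_ge0) (ltW rho_gt0)))
    (divr_ge0 (ltW kappaD1_gt0) (ltW tau_gt0)).
Qed.

End Orthogonal.

Lemma closed1_closed2 (N K : nat) (rho : R) : 0 < rho ->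
  closed1 L N K alpha kappa rho_tr rho = closed2 L N K alpha kappa rho_tr rho.
Proof.
move=> rho_gt0; rewrite /closed1 /closed2 /Ac /Bc /Defs.nu.
case: (posnP N) => [->|N_gt0]; first by rewrite !(mulr0, mul0r, invr0, addr0, add0r).
congr (_ / _); field.
by rewrite ?gt_eqF ?kappaD1_gt0 ?tau_gt0 ?nu_den_gt0 ?rho_gt0 ?rho_tr_gt0 ?ltr0n.
Qed.

Lemma closed1_gap_cvg (rho : R) (N K : nat -> nat) (C : R) :
  0 < rho -> (fun n => (N n)%:R : R) @ \oo --> +oo -> (forall n, (0 < K n)%N) ->
  (\forall n \near \oo, (N n)%:R / (K n)%:R <= C) ->
  (fun n => (orth_den (N n) (K n) rho)^-1 - closed1 L (N n) (K n) alpha kappa rho_tr rho)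
    @ \oo --> 0.
Proof.
move=> rho_gt0 N_oo K_gt0 NK_le.
pose m := Lbar * (1 + kappa) / (tau * nu).
have m_gt0 : 0 < m.
  exact: divr_gt0 (mulr_gt0 Lbar_gt0 kappaD1_gt0) (mulr_gt0 tau_gt0 nu_gt0).
have N_pos : \forall n \near \oo, 0 < (N n)%:R :> R by move/cvgryPgt: N_oo; apply.
have coef_gt0 : 0 < (1 + kappa) * nu * tau ^+ 2.
  exact: mulr_gt0 (mulr_gt0 kappaD1_gt0 nu_gt0) (exprn_gt0 2 tau_gt0).
pose d n := kappa / ((1 + kappa) * nu * tau ^+ 2 * (N n)%:R).
apply: cvg_trans _
  (cvg_invr_sub_invrD (E := fun n => orth_den (N n) (K n) rho) (d := d) (u := C / m) _ _ _).
- apply: near_eq_cvg; near=> n.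
  have Nn_gt0 : (0 < N n)%N by rewrite -(ltr0n R); near: n.
  by rewrite closed1_orth_den.
- near=> n.
  have Nn_gt0 : (0 < N n)%N by rewrite -(ltr0n R); near: n.
  have NKn_le : (N n)%:R / (K n)%:R <= C by near: n.
  have lb_gt0 : 0 < (K n)%:R / (N n)%:R * m by rewrite mulr_gt0 // divr_gt0 ?ltr0n.
  have lb_le := orth_den_ge Nn_gt0 (K_gt0 n) rho_gt0.
  split; first exact: lt_le_trans lb_le.
  apply: le_trans (_ : ((K n)%:R / (N n)%:R * m)^-1 <= _).
    by rewrite lef_pV2 ?posrE // (lt_le_trans lb_gt0).
  rewrite invfM invf_div ler_wpM2r // invr_ge0 ltW //.
- by apply: nearW => n; exact: divr_ge0 kappa_ge0 (mulr_ge0 (ltW coef_gt0) (ler0n _ _)).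
- have Ninv_cvg : (fun n => (N n)%:R^-1 : R) @ \oo --> 0 by apply/gtr0_cvgV0.
  rewrite -(mulr0 (kappa / ((1 + kappa) * nu * tau ^+ 2))) /d.
  under eq_fun => n do rewrite invfM mulrA.
  exact: cvgM (cvg_cst _) Ninv_cvg.
Unshelve. all: end_near.
Qed.
End Channel.

Unset Implicit Arguments.

Theorem corollary5 (R : realType) (L : nat) (alpha kappa rho_tr rho_ul rho_dl : R)
    (N K : nat -> nat)
    (a : forall n : nat, 'I_L -> 'I_(K n) -> 'cV[R[i]]_(N n)) :
  (0 < L)%N ->
  0 < alpha -> alpha <= 1 -> 0 <= kappa ->
  0 < rho_tr -> 0 < rho_ul -> 0 < rho_dl ->
  ((fun n => (N n)%:R : R) @ \oo --> +oo) ->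
  ((fun n => (K n)%:R : R) @ \oo --> +oo) ->
  (forall eps : R, 0 < eps ->
     \forall n \near \oo, 1 - eps <= (N n)%:R / (K n)%:R) ->
  (exists C : R, \forall n \near \oo, (N n)%:R / (K n)%:R <= C) ->
  (forall n (j : 'I_L) (i k : 'I_(K n)),
     ninner (hbar kappa (a n) j i) (hbar kappa (a n) j k)
       = (if i == k then kappa / (1 + kappa) else 0)%:C) ->
  (forall n, closed1 L (N n) (K n) alpha kappa rho_tr rho_ul
             = closed2 L (N n) (K n) alpha kappa rho_tr rho_ul
          /\ closed1 L (N n) (K n) alpha kappa rho_tr rho_dl
             = closed2 L (N n) (K n) alpha kappa rho_tr rho_dl) /\
  (forall (j : 'I_L) (k : forall n, 'I_(K n)),
     ((fun n => gamma_MRC alpha kappa rho_tr (a n) rho_ul j (k n)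
                - closed1 L (N n) (K n) alpha kappa rho_tr rho_ul) @ \oo --> 0)
  /\ ((fun n => gamma_MRT alpha kappa rho_tr (a n) rho_dl j (k n)
                - closed1 L (N n) (K n) alpha kappa rho_tr rho_dl) @ \oo --> 0)).
Proof.
move=> L_gt0 alpha_gt0 _ kappa_ge0 rho_tr_gt0 rho_ul_gt0 rho_dl_gt0 N_oo _ _
  [C NK_le] los_orth.
split=> [n|j k]; first by split; apply: closed1_closed2.
have K_gt0 n : (0 < K n)%N := leq_ltn_trans (leq0n _) (ltn_ord (k n)).
have N_gt0 : \forall n \near \oo, (0 < N n)%N.
  by move/cvgryPgt: N_oo => /(_ 0); apply: filterS => n; rewrite ltr0n.
have gap_cvg rho (rho_gt0 : 0 < rho) :=
  closed1_gap_cvg L_gt0 alpha_gt0 kappa_ge0 rho_tr_gt0 rho_gt0 N_oo K_gt0 NK_le.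
split; [apply: cvg_trans _ (gap_cvg _ rho_ul_gt0) |
        apply: cvg_trans _ (gap_cvg _ rho_dl_gt0)]; apply: near_eq_cvg; near=> n.
- by rewrite gamma_MRC_orth //; near: n.
- by rewrite gamma_MRT_orth //; near: n.
Unshelve. all: end_near.
Qed.
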